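(* Let $A,A'$ be bounded distributive lattices and $f:A\to A'$ a lattice morphism. Let $\mathcal{L}$ (resp. $\mathcal{L}'$) be the abstract logic with expressions $A$ (resp. $A'$), theories the proper filters of $A$ (resp. $A'$), and connectives $\vee,\wedge,\bot,\top$. Then $f:\mathcal{L}\to\mathcal{L}'$ is a stable logic map.
   Context: An abstract logic is a triple $\mathcal{L}=(Expr_{\mathcal{L}},Th_{\mathcal{L}},\mathcal{C}_{\mathcal{L}})$ where $Expr_{\mathcal{L}}$ is a set, $Th_{\mathcal{L}}$ a non-empty set of subsets of $Expr_{\mathcal{L}}$ (theories) closed under intersections of non-empty subfamilies, and $\mathcal{C}_{\mathcal{L}}$ a set of operations on $Expr_{\mathcal{L}}$. A theory $T$ is prime if $T=\bigcap\mathcal{T}$ for a non-empty finite $\mathcal{T}\subseteq Th_{\mathcal{L}}$ implies $T\in\mathcal{T}$; $PTh_{\mathcal{L}}$ denotes the set of prime theories (for the logic of proper filters of a bounded distributive lattice these are exactly the prime filters). A stable logic map $h:\mathcal{L}\to\mathcal{L}'$ is a function $Expr_{\mathcal{L}}\to Expr_{\mathcal{L}'}$ with $h^{-1}(T')\in Th_{\mathcal{L}}$ for all $T'\in Th_{\mathcal{L}'}$ and $h^{-1}(P')\in PTh_{\mathcal{L}}$ for all $P'\in PTh_{\mathcal{L}'}$. *)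

From HB Require Import structures.
From mathcomp Require Import all_boot all_order.
From Stdlib Require Import List.
Set Implicit Arguments. Unset Strict Implicit. Unset Printing Implicit Defensive.
Import Order.TTheory.
Local Open Scope order_scope.

Definition pset (E : Type) := E -> Prop.

Definition preim (E E' : Type) (h : E -> E') (S : pset E') : pset E :=
  fun x => S (h x).

Definition bigcap_list (E : Type) (s : list (pset E)) : pset E :=
  fun x => forall U, List.In U s -> U x.

(* Abstract logic: only the set of theories [Th] matters for the notions below.
   Prime theory: T = ⋂𝒯 for a non-empty finite 𝒯 ⊆ Th implies T ∈ 𝒯. *)
Definition prime_theory (E : Type) (Th : pset E -> Prop) (T : pset E) : Prop :=
  Th T /\
  forall s : list (pset E), s <> nil -> (forall U, List.In U s -> Th U) ->
    T = bigcap_list s -> List.In T s.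

Definition stable_logic_map (E E' : Type) (Th : pset E -> Prop)
  (Th' : pset E' -> Prop) (h : E -> E') : Prop :=
  (forall T', Th' T' -> Th (preim h T')) /\
  (forall P', prime_theory Th' P' -> prime_theory Th (preim h P')).

Definition proper_filter (d : Order.disp_t) (A : tbLatticeType d) (F : pset A) : Prop :=
  [/\ F \top,
      (forall x y : A, F x -> x <= y -> F y),
      (forall x y : A, F x -> F y -> F (x `&` y)) &
      ~ (forall x : A, F x)].

Definition bounded_lattice_morphism (d d' : Order.disp_t)
  (A : tbLatticeType d) (A' : tbLatticeType d') (f : A -> A') : Prop :=
  [/\ (forall x y, f (x `&` y) = f x `&` f y),
      (forall x y, f (x `|` y) = f x `|` f y),
      f \bot = \bot & f \top = \top].

(** A bounded lattice morphism [f] is monotone and preserves [\top], [\bot]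
    and meets, so it pulls proper filters back to proper filters.  In a
    distributive lattice the prime theories of the logic of proper filters are
    exactly the join-prime proper filters: if [x `|` y] lies in [P] but
    neither [x] nor [y] does, then [P] is the intersection of the two proper
    filters generated by [P] with [x] and with [y]; conversely, a join-prime
    filter containing a finite intersection of upsets contains one of them.
    Since [f] preserves joins, join-primeness pulls back too. *)

From Pilot Require Import Defs.
From mathcomp Require Import all_boot all_order.
From Stdlib Require Import List Classical FunctionalExtensionality PropExtensionality.
Import Order.TTheory.
Local Open Scope order_scope.
Set Implicit Arguments. Unset Strict Implicit.

Lemma pset_ext (E : Type) (U V : pset E) : (forall x, U x <-> V x) -> U = V.
Proof.
move=> UV; apply: functional_extensionality => x.
exact: propositional_extensionality.
Qed.

Definition up_closed d (A : porderType d) (U : pset A) : Prop :=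
  forall x y : A, U x -> x <= y -> U y.

Definition join_prime d (A : latticeType d) (Q : pset A) : Prop :=
  forall x y : A, Q (x `|` y) -> Q x \/ Q y.

Lemma proper_filter_up_closed d (A : tbLatticeType d) (F : pset A) :
  proper_filter F -> up_closed F.
Proof. by case. Qed.

(** The second disjunct accounts for the empty family, whose intersection is everything. *)
Lemma join_prime_bigcap_sub d (A : latticeType d) (Q : pset A) :
  join_prime Q -> forall s : list (pset A),
  (forall U, In U s -> up_closed U) -> (forall x, bigcap_list s x -> Q x) ->
  (exists2 U, In U s & forall x, U x -> Q x) \/ (forall x, Q x).
Proof.
move=> Qjp; elim=> [|U s IHs] s_up sQ.
  by right=> x; apply: sQ.
have [UQ|nUQ] := classic (forall x, U x -> Q x).
  by left; exists U => //; left.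
have [x Ux nQx] : exists2 x, U x & ~ Q x.
  by apply: NNPP => nx; apply: nUQ => x Ux; apply: NNPP => nQx; apply: nx; exists x.
have sQ' : forall y, bigcap_list s y -> Q y.
  move=> y sy; have /Qjp[//|//] : Q (x `|` y).
  apply: sQ => V [<-|sV].
    by apply: s_up Ux _; [left|exact: leUl].
  by apply: s_up (sy V sV) _; [right|exact: leUr].
case: (IHs (fun V sV => s_up V (or_intror sV)) sQ') => [[V sV VQ]|Qall].
  by left; exists V => //; right.
by case: nQx.
Qed.

Lemma join_prime_filter_prime d (A : tbLatticeType d) (Q : pset A) :
  proper_filter Q -> join_prime Q -> prime_theory (@proper_filter d A) Q.
Proof.
move=> Qpf Qjp; split=> // s _ s_pf Qs.
have s_up U (sU : In U s) : up_closed U := proper_filter_up_closed (s_pf U sU).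
have sQ x : bigcap_list s x -> Q x by rewrite Qs.
case: (join_prime_bigcap_sub Qjp s_up sQ) => [[U sU UQ]|Qall]; last first.
  by case: Qpf => _ _ _ [].
suff -> : Q = U by [].
by apply: pset_ext => x; split=> [|/UQ//]; rewrite Qs; apply.
Qed.

Section FilterJoin.
Variables (d : Order.disp_t) (A : tbDistrLatticeType d) (P : pset A).
Hypotheses (P_top : P \top) (P_up : up_closed P)
  (P_meet : forall x y : A, P x -> P y -> P (x `&` y)).

Definition filter_join (a : A) : pset A := fun z => exists2 p, P p & p `&` a <= z.

Lemma filter_join_sub a z : P z -> filter_join a z.
Proof. by move=> Pz; exists z => //; exact: leIl. Qed.

Lemma filter_join_self a : filter_join a a.
Proof. by exists \top => //; exact: leIr. Qed.

Lemma filter_join_up a : up_closed (filter_join a).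
Proof. by move=> u v [p Pp pu] uv; exists p => //; exact: le_trans uv. Qed.

Lemma filter_join_meet a u v :
  filter_join a u -> filter_join a v -> filter_join a (u `&` v).
Proof.
move=> [p Pp pu] [q Pq qv]; exists (p `&` q); first exact: P_meet.
by rewrite lexI (le_trans _ pu) ?(le_trans _ qv) // leI2 ?leIl ?leIr.
Qed.

Lemma filter_join_cap x y z :
  P (x `|` y) -> filter_join x z -> filter_join y z -> P z.
Proof.
move=> Pxy [p Pp pz] [q Pq qz].
apply: (P_up (x := (p `&` q) `&` (x `|` y))); first by apply: P_meet => //; exact: P_meet.
by rewrite meetUr leUx (le_trans _ pz) ?(le_trans _ qz) // leI2 ?leIl ?leIr.
Qed.

Lemma proper_filter_join x y :
  P (x `|` y) -> ~ P y -> proper_filter (filter_join x).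
Proof.
move=> Pxy nPy; split.
- exact: filter_join_sub.
- exact: filter_join_up.
- exact: filter_join_meet.
- by move=> all; apply/nPy/(filter_join_cap Pxy (all y))/filter_join_self.
Qed.

Lemma bigcap_filter_join x y :
  P (x `|` y) -> P = bigcap_list (filter_join x :: filter_join y :: nil).
Proof.
move=> Pxy; apply: pset_ext => z; split.
  by move=> Pz U [<-|[<-|[]]]; apply: filter_join_sub.
by move=> cz; apply: (filter_join_cap Pxy); apply: cz; [left|right; left].
Qed.

End FilterJoin.

Lemma prime_filter_join_prime d (A : tbDistrLatticeType d) (P : pset A) :
  prime_theory (@proper_filter d A) P -> join_prime P.
Proof.
move=> [Ppf Pprime] x y Pxy; have [P_top P_up P_meet _] := Ppf.
apply: NNPP => nPxy.
have nPx : ~ P x by move=> Px; apply: nPxy; left.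
have nPy : ~ P y by move=> Py; apply: nPxy; right.
have pfx := proper_filter_join P_top P_up P_meet Pxy nPy.
have Pyx : P (y `|` x) by rewrite joinC.
have pfy := proper_filter_join P_top P_up P_meet Pyx nPx.
have s_pf : forall U, In U (filter_join P x :: filter_join P y :: nil) ->
    proper_filter U.
  by move=> U [<-|[<-|[]]].
have Pcap := bigcap_filter_join P_up P_meet Pxy.
case: (Pprime _ _ s_pf Pcap) => // [Px|[Py|[]]].
- by apply: nPx; rewrite -Px; apply: filter_join_self.
- by apply: nPy; rewrite -Py; apply: filter_join_self.
Qed.

Lemma meet_morphism_homo d d' (A : latticeType d) (A' : latticeType d')
    (f : A -> A') :
  (forall x y, f (x `&` y) = f x `&` f y) -> {homo f : x y / x <= y}.
Proof. by move=> fI x y; rewrite !leEmeet -fI => /eqP ->. Qed.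

Lemma proper_filter_preim d d' (A : tbLatticeType d) (A' : tbLatticeType d')
    (f : A -> A') (F' : pset A') :
  bounded_lattice_morphism f -> proper_filter F' -> proper_filter (Defs.preim f F').
Proof.
move=> [fI _ f0 f1] [F'1 F'up F'I F'proper]; split.
- by rewrite /Defs.preim f1.
- by move=> x y F'x /(meet_morphism_homo fI); apply: F'up.
- by move=> x y F'x F'y; rewrite /Defs.preim fI; apply: F'I.
- move=> all; apply: F'proper => z.
  by apply: (F'up (f \bot)); [exact: all | rewrite f0 le0x].
Qed.

Lemma join_prime_preim d d' (A : latticeType d) (A' : latticeType d')
    (f : A -> A') (Q' : pset A') :
  (forall x y, f (x `|` y) = f x `|` f y) -> join_prime Q' -> join_prime (Defs.preim f Q').
Proof. by move=> fU Q'jp x y; rewrite /Defs.preim fU; apply: Q'jp. Qed.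

Theorem lemma3p13 (d d' : Order.disp_t)
  (A : tbDistrLatticeType d) (A' : tbDistrLatticeType d') (f : A -> A') :
  bounded_lattice_morphism f ->
  stable_logic_map (@proper_filter d A) (@proper_filter d' A') f.
Proof.
move=> fmorph; split=> [T' T'pf|P' P'prime]; first exact: proper_filter_preim.
apply: join_prime_filter_prime.
  by apply: proper_filter_preim; case: P'prime.
by case: fmorph => _ fU _ _; apply/join_prime_preim/prime_filter_join_prime.
Qed.
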